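(* Let $G$ be a maximal $1$-plane graph with at least $4$ vertices in which every edge lies in some $K_4$-subgraph, and let $\{G_i\}_{i\in\{0,\dots,N\}}$ be a $K_4$-extension sequence of $G$ determined by the SWM*-rule, with $G_i=G[V(G_{i-1})\cup V(F_i)]$. For any $i\in\{1,\dots,N\}$, if $\{s,t\}$ is a cut-set of $G_i$ but not of $G_{i-1}$, then (1) $F_i$ is either a weak or a micro $K_4$-link from $G_{i-1}$; and (2) either $\{s,t\}\subseteq V(G_{i-1})$, or $F_i$ is a micro $K_4$-link from $G_{i-1}$ and $|\{s,t\}\cap V(G_{i-1})|=1$.
   Context: A $1$-plane graph is a simple graph drawn in the plane (vertices distinct points, edges arcs joining their ends, no edge crossing itself, two edges crossing at most once, adjacent edges not crossing) so that every edge is crossed at most once; it is maximal if no edge joining two non-adjacent vertices can be added so that the result is still a simple $1$-plane graph. An edge is clean if it crosses no other edge. If edge $ux$ crosses another edge at point $\alpha$, the arc $u\alpha$ is the near half-edge of $ux$ incident with $u$. Two edge segments are consecutive on the boundary of a face if they are consecutive on one of the closed walks forming that boundary. $G[A]$ is the subgraph induced by $A$. A cut-set of a connected graph is a set of vertices whose deletion disconnects it. For a vertex-induced subgraph $G'$ and a $K_4$-subgraph $F$ of $G$ with $1\le|V(F)\cap V(G')|\le 3$, $F$ is a strong/weak/micro $K_4$-link from $G'$ when $|V(F)\cap V(G')|=3/2/1$, and $G[V(G')\cup V(F)]$ is the corresponding $K_4$-extension of $G'$. SWM*-rule for a proper vertex-induced subgraph $G'$: choose any strong $K_4$-link from $G'$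 if one exists; otherwise any weak one if one exists; otherwise choose $u\in V(G')$ with $N_G(u)\not\subseteq V(G')$, then $x\in N_G(u)\setminus V(G')$ such that for some $w\in N_G(u)\cap V(G')$ the edge $ux$ (or its near half-edge at $u$) and $uw$ (or its near half-edge at $u$) are consecutive on the boundary of some face of $G$; if $ux$ is clean choose any $K_4$-subgraph containing $ux$, and if $ux$ crosses edge $st$ choose $G[\{u,x,s,t\}]$. A $K_4$-extension sequence determined by the SWM*-rule is $G_0\cong K_4$, $G_N=G$, $G_i=G[V(G_{i-1})\cup V(F_i)]$ with $F_i$ a $K_4$-link from $G_{i-1}$ chosen by the SWM*-rule. *)

(* A simple 1-plane graph is encoded combinatorially through its
   planarization: the plane map obtained by turning every crossing point
   into a degree-4 node.  The planarization is given as a combinatorial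
   map on a finite set of darts D (half edge-segments):
     node  : D -> V + C   tail of a dart (a real vertex, or a crossing),
     alpha : involution reversing a dart,
     sigma : rotation (cyclic order of darts around each node).
   Faces are the orbits of  phi := sigma o alpha.  Planarity (genus 0)
   is Euler's formula for the connected map. *)
From mathcomp Require Import all_boot all_fingroup.
Set Implicit Arguments. Unset Strict Implicit. Unset Printing Implicit Defensive.

Section OnePlane.
Variables (V C D : finType) (node : D -> (V + C)%type) (alpha sigma : {perm D}).

Definition phi (d : D) : D := sigma (alpha d).

Definition norb (f : D -> D) : nat := #|[set x | froot f x == x]|.

(* the far end of the edge of G whose near half-edge starts with dart d:
   if alpha d ends at a crossing, continue straight through the crossing
   (the opposite dart in the rotation, sigma^2) *)
Definition farnode (d : D) : V + C :=
  match node (alpha d) with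
  | inl v => inl v
  | inr _ => node (alpha (sigma (sigma (alpha d))))
  end.

Definition one_plane : Prop :=
  [/\ (forall d, alpha (alpha d) = d) /\ (forall d, alpha d != d),
      (forall d d', (node d == node d') = fconnect sigma d d'),
      (forall n, exists d, node d = n) /\
      (forall d d', connect [rel x y | (y == alpha x) || (y == sigma x)] d d'),
      (* planarity: V - E + F = 2 for the connected planarization *)
      norb sigma + norb phi = #|D| %/ 2 + 2 &
      [/\
          (forall c, #|[set d | node d == inr c]| = 4),
          (* each edge is crossed at most once: segments at a crossing end
             at real vertices *)
          (forall d c, node d = inr c -> exists v, node (alpha d) = inl v),
          (* the two crossing edges have 4 distinct ends (adjacent edges do
             not cross, no edge crosses itself) *)
          (forall d d' c, node d = inr c -> node d' = inr c ->
             node (alpha d) = node (alpha d') -> d = d'),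
          (forall d u, node d = inl u -> farnode d != inl u) &
          (* no multiple edges *)
          (forall d d' u, node d = inl u -> node d' = inl u ->
             farnode d = farnode d' -> d = d')]].

Definition gadj : rel V :=
  fun u v => [exists d, (node d == inl u) && (farnode d == inl v)].

Definition on_face (u : V) (d : D) : Prop :=
  exists du, node du = inl u /\ fconnect phi du d.

(* a new edge uv can be added to the drawing keeping it simple 1-plane:
   either drawn inside a common face (clean), or crossing exactly one
   clean edge ab, with a, b not in {u, v}, passing from the face on one
   side of ab to the face on the other side *)
Definition can_add (u v : V) : Prop :=
  (exists d, on_face u d /\ on_face v d) \/
  (exists de a b, [/\ node de = inl a, node (alpha de) = inl b,
                      [&& a != u, a != v, b != u & b != v],
                      on_face u de & on_face v (alpha de)]).

Definition maximal_1p : Prop :=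
  forall u v, u != v -> ~~ gadj u v -> ~ can_add u v.

Definition clean (u x : V) : Prop :=
  exists d, [/\ node d = inl u, farnode d = inl x & exists v, node (alpha d) = inl v].

Definition crosses (u x s t : V) : Prop :=
  exists d c, [/\ node d = inl u, farnode d = inl x, node (alpha d) = inr c &
    (node (alpha (sigma (alpha d))) = inl s /\
     node (alpha (sigma (sigma (sigma (alpha d))))) = inl t) \/
    (node (alpha (sigma (alpha d))) = inl t /\
     node (alpha (sigma (sigma (sigma (alpha d))))) = inl s)].

(* ux (or its near half-edge at u) and uw (or its near half-edge at u) are
   consecutive on the boundary of some face: rotation-consecutive at u *)
Definition consecutive (u x w : V) : Prop :=
  exists d, node d = inl u /\
    ((farnode d = inl x /\ farnode (sigma d) = inl w) \/
     (farnode d = inl w /\ farnode (sigma d) = inl x)).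

(* K4-subgraphs, identified with their (4-clique) vertex sets *)
Definition isK4 (F : {set V}) : bool :=
  (#|F| == 4) && [forall u in F, forall v in F, (u != v) ==> gadj u v].

Definition K4link (A F : {set V}) : bool :=
  isK4 F && (1 <= #|F :&: A| <= 3).
Definition strong_link (A F : {set V}) : bool := isK4 F && (#|F :&: A| == 3).
Definition weak_link (A F : {set V}) : bool := isK4 F && (#|F :&: A| == 2).
Definition micro_link (A F : {set V}) : bool := isK4 F && (#|F :&: A| == 1).

Definition swm_choice (A F : {set V}) : Prop :=
  ((exists F', strong_link A F') /\ strong_link A F) \/
  ((~ exists F', strong_link A F') /\ (exists F', weak_link A F') /\ weak_link A F) \/
  [/\ ~ (exists F', strong_link A F'), ~ (exists F', weak_link A F'), isK4 F &
      exists u x w, [/\ [&& u \in A, x \notin A & w \in A], gadj u x, gadj u w &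
        consecutive u x w /\
        ((clean u x /\ u \in F /\ x \in F) \/
         (exists s t, crosses u x s t /\ F = [set u; x; s; t]))]].

(* K4-extension sequence determined by the SWM*-rule: Vs i = V(G_i),
   Fs i = V(F_i) *)
Definition swm_sequence (N : nat) (Vs Fs : nat -> {set V}) : Prop :=
  [/\ isK4 (Vs 0), Vs N = setT &
      forall i, 1 <= i <= N ->
        [/\ K4link (Vs i.-1) (Fs i), swm_choice (Vs i.-1) (Fs i) &
            Vs i = Vs i.-1 :|: Fs i]].

End OnePlane.

Definition induced_connect (V : finType) (adj : rel V) (B : {set V}) : rel V :=
  connect [rel x y | [&& x \in B, y \in B & adj x y]].

Definition cutset (V : finType) (adj : rel V) (A S : {set V}) : Prop :=
  S \subset A /\
  exists u v, [/\ u \in A :\: S, v \in A :\: S &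
                  ~~ induced_connect adj (A :\: S) u v].

From mathcomp Require Import all_boot all_fingroup zify.
Set Implicit Arguments. Unset Strict Implicit. Unset Printing Implicit Defensive.

(* Every prefix G_j of the sequence stays 2-connected.  Adding a K_4-link F
   to G_{j-1} preserves this as soon as F meets G_{j-1} in two vertices; if it
   meets it in a single vertex u, the SWM*-rule picked F through an edge ux
   rotation-consecutive at u with an edge uw of G_{j-1}.  The face between them
   contains a vertex of F - G_{j-1} and one of G_{j-1} - u (using that no
   strong or weak link remains), and by maximality they are adjacent.
   Consequently, if {s, t} newly separates G_i, then G_{i-1} - {s, t} and the
   clique F_i - {s, t} are connected, so they must be disjoint: V(F_i) meets
   V(G_{i-1}) only inside {s, t}, and counting gives both claims. *)

Section InducedConnectivity.
Variables (T : finType) (adj : rel T).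

Definition connected_on (B : {set T}) : Prop :=
  {in B &, forall u v, induced_connect adj B u v}.

Lemma induced_connectS (X Y : {set T}) u v :
  X \subset Y -> induced_connect adj X u v -> induced_connect adj Y u v.
Proof.
move=> sXY; apply: connect_sub => x y /and3P[xX yX xy]; apply: connect1.
by rewrite /= (subsetP sXY _ xX) (subsetP sXY _ yX).
Qed.

Lemma induced_connect1 (B : {set T}) u v :
  u \in B -> v \in B -> adj u v -> induced_connect adj B u v.
Proof. by move=> uB vB uv; apply: connect1; rewrite /= uB vB. Qed.

Lemma connected_on_setU (X Y : {set T}) x y :
  connected_on X -> connected_on Y -> x \in X -> y \in Y ->
  induced_connect adj (X :|: Y) x y -> induced_connect adj (X :|: Y) y x ->
  connected_on (X :|: Y).
Proof.
move=> cX cY xX yY xy yx p q.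
have sX : X \subset X :|: Y := subsetUl X Y.
have sY : Y \subset X :|: Y := subsetUr X Y.
case/setUP=> [pX|pY] /setUP[qX|qY].
- exact: induced_connectS sX (cX _ _ pX qX).
- apply: connect_trans (induced_connectS sX (cX _ _ pX xX)) _.
  exact: connect_trans xy (induced_connectS sY (cY _ _ yY qY)).
- apply: connect_trans (induced_connectS sY (cY _ _ pY yY)) _.
  exact: connect_trans yx (induced_connectS sX (cX _ _ xX qX)).
- exact: induced_connectS sY (cY _ _ pY qY).
Qed.

Lemma connected_on_clique (B : {set T}) :
  {in B &, forall u v, u != v -> adj u v} -> connected_on B.
Proof.
move=> clB u v uB vB; have [->|uv] := eqVneq u v; first exact: connect0.
exact: induced_connect1 (clB _ _ uB vB uv).
Qed.

Lemma cutset_disconnected (A S : {set T}) :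
  cutset adj A S -> ~ connected_on (A :\: S).
Proof. by case=> _ [u [v [uAS vAS /negP nuv]]] cAS; apply/nuv/cAS. Qed.

Lemma connected_on_noncut (A S : {set T}) :
  S \subset A -> ~ cutset adj A S -> connected_on (A :\: S).
Proof.
move=> sSA ncut u v uAS vAS; apply/negPn/negP => nuv.
by apply: ncut; split=> //; exists u, v.
Qed.

End InducedConnectivity.

Lemma card_set4_uniq (T : finType) (a b c d : T) :
  #|[set a; b; c; d]| = 4 -> uniq [:: a; b; c; d].
Proof.
move=> card4; apply/card_uniqP; rewrite /= -[in RHS]card4.
by apply: eq_card => z; rewrite !inE -!orbA.
Qed.

Section K4Links.
Variables (V C D : finType) (node : D -> (V + C)%type) (alpha sigma : {perm D}).
Local Notation adj := (gadj node alpha sigma).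

Lemma K4_adj (K : {set V}) :
  isK4 node alpha sigma K -> {in K &, forall a b, a != b -> adj a b}.
Proof.
case/andP=> _ /forallP clK a b aK bK ab.
by move: (clK a); rewrite aK => /forallP/(_ b); rewrite bK ab.
Qed.

Lemma K4_connected_setD (K S : {set V}) :
  isK4 node alpha sigma K -> connected_on adj (K :\: S).
Proof.
move=> K4K; apply: connected_on_clique => a b /setDP[aK _] /setDP[bK _].
exact: (K4_adj K4K aK bK).
Qed.

Lemma K4_subset_noSW (A K : {set V}) :
  ~ (exists F, strong_link node alpha sigma A F) ->
  ~ (exists F, weak_link node alpha sigma A F) ->
  isK4 node alpha sigma K -> 2 <= #|K :&: A| -> K \subset A.
Proof.
move=> noS noW K4K.
have: #|K :&: A| <= #|K| by rewrite subset_leq_card ?subsetIl.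
case/andP: (K4K) => /eqP cardK _; rewrite cardK.
case cardKA: #|K :&: A| => [|[|[|[|[|n]]]]] // _ _.
- by case: noW; exists K; rewrite /weak_link K4K cardKA.
- by case: noS; exists K; rewrite /strong_link K4K cardKA.
- by apply/setIidPl/eqP; rewrite eqEcard subsetIl cardK cardKA.
Qed.

End K4Links.

Section PlaneMap.
Variables (V C D : finType) (node : D -> (V + C)%type) (alpha sigma : {perm D}).
Hypothesis plane : one_plane node alpha sigma.
Local Notation adj := (gadj node alpha sigma).
Local Notation far := (farnode node alpha sigma).
Local Notation face := (phi alpha sigma).
Local Notation cross := (crosses node alpha sigma).

Lemma alphaK d : alpha (alpha d) = d.
Proof. by case: plane => [[]]. Qed.

Lemma node_sigma d : node (sigma d) = node d.
Proof. by case: plane => _ nodeE _ _ _; apply/eqP; rewrite eq_sym nodeE fconnect1. Qed.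

Lemma crossing_rotation d c : node d = inr c ->
  sigma (sigma (sigma (sigma d))) = d /\
  uniq [:: d; sigma d; sigma (sigma d); sigma (sigma (sigma d))].
Proof.
move=> dc; have order4 : fingraph.order sigma d = 4.
  case: plane => _ nodeE _ _ [deg4 _ _ _ _].
  rewrite /fingraph.order -(deg4 c); apply: eq_card => d'.
  by rewrite inE -dc eq_sym nodeE.
have := iter_order (@perm_inj _ sigma) d; have := orbit_uniq sigma d.
by rewrite /fingraph.orbit order4 /= => ->.
Qed.

Lemma crossing_end d c : node d = inr c -> exists v, node (alpha d) = inl v.
Proof. by case: plane => _ _ _ _ [_ ends _ _ _]; apply: ends. Qed.

Lemma crossing_end_inj d d' c : node d = inr c -> node d' = inr c ->
  node (alpha d) = node (alpha d') -> d = d'.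
Proof. by case: plane => _ _ _ _ [_ _ inj _ _]; apply: inj. Qed.

Lemma far_inj d d' u : node d = inl u -> node d' = inl u -> far d = far d' -> d = d'.
Proof. by case: plane => _ _ _ _ [_ _ _ _ inj]; apply: inj. Qed.

Lemma gadj_neq u v : adj u v -> u != v.
Proof.
case/existsP=> d /andP[/eqP du /eqP dv]; apply/eqP => uv.
case: plane => _ _ _ _ [_ _ _ noloop _].
by move: (noloop d u du); rewrite dv uv eqxx.
Qed.

Lemma face_step d d' : face d = d' -> fconnect face d d'.
Proof. by move=> <-; apply: fconnect1. Qed.

Lemma crossing_adj_opposite e c u v : node e = inr c -> node (alpha e) = inl u ->
  node (alpha (sigma (sigma e))) = inl v -> adj u v.
Proof.
move=> ec eu ev; apply/existsP; exists (alpha e).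
by rewrite eu /farnode alphaK ec ev !eqxx.
Qed.

Lemma crossing_side_ends e c : node e = inr c -> exists v1 v3,
  node (alpha (sigma e)) = inl v1 /\ node (alpha (sigma (sigma (sigma e)))) = inl v3.
Proof.
move=> ec; have [v1 e1] : exists v, node (alpha (sigma e)) = inl v.
  by apply: (crossing_end (c := c)); rewrite node_sigma.
have [v3 e3] : exists v, node (alpha (sigma (sigma (sigma e)))) = inl v.
  by apply: (crossing_end (c := c)); rewrite !node_sigma.
by exists v1, v3.
Qed.

Lemma crosses_end_in u x s t y y' :
  cross u x s t -> cross u x y y' -> y \in [set s; t].
Proof.
move=> [d [c [du dx dc ends]]] [d' [c' [d'u d'x _ ends']]].
have dd' : d' = d by apply: (far_inj d'u du); rewrite d'x dx.
rewrite dd' in ends'.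
case: ends => [[ds dt]|[dt ds]]; case: ends' => [[dy _]|[_ dy]];
  by move: dy; rewrite ?ds ?dt => -[<-]; rewrite !inE eqxx ?orbT.
Qed.

Lemma clean_not_crosses u x s t : clean node alpha sigma u x -> ~ cross u x s t.
Proof.
move=> [d [du dx [v dv]]] [d' [c [d'u d'x d'c _]]].
have dd' : d' = d by apply: (far_inj d'u du); rewrite d'x dx.
by move: d'c; rewrite dd' dv.
Qed.

(* A vertex met on either face bordering the edge uv next to u. *)
Definition side_vertex (u v y : V) : Prop :=
  y = v \/ exists y', cross u v y y'.

Lemma face_before_edge d u v : node d = inl u -> far d = inl v ->
  exists y dy, [/\ node dy = inl y, fconnect face dy (alpha d) &
                   side_vertex u v y].
Proof.
move=> du dv; case dc: (node (alpha d)) => [v'|c].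
  have <- : v' = v by move: dv; rewrite /farnode dc => -[].
  by exists v', (alpha d); split; [ | apply: connect0 | left].
have [rot4 _] := crossing_rotation dc.
have [v1 [v3 [e1 e3]]] := crossing_side_ends dc.
exists v3, (alpha (sigma (sigma (sigma (alpha d))))); split=> //.
  by apply: face_step; rewrite /phi alphaK rot4.
by right; exists v1, d, c; split=> //; right.
Qed.

Lemma face_after_edge d u v : node d = inl u -> far d = inl v ->
  exists y dy, [/\ node dy = inl y, fconnect face d dy & side_vertex u v y].
Proof.
move=> du dv; case dc: (node (alpha d)) => [v'|c].
  have <- : v' = v by move: dv; rewrite /farnode dc => -[].
  by exists v', (sigma (alpha d)); split; [rewrite node_sigma | apply: face_step | left].
have [v1 [v3 [e1 e3]]] := crossing_side_ends dc.
exists v1, (sigma (alpha (sigma (alpha d)))); split.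
- by rewrite node_sigma.
- exact: connect_trans (face_step erefl) (face_step erefl).
- by right; exists v3, d, c; split=> //; left.
Qed.

Section Maximal.
Hypothesis maxG : maximal_1p node alpha sigma.

(* Maximality: an edge could otherwise be drawn inside the common face. *)
Lemma face_adj u v du dv : u != v -> node du = inl u -> node dv = inl v ->
  fconnect face du dv -> adj u v /\ adj v u.
Proof.
move=> uv du_u dv_v du_dv.
have onu : on_face node alpha sigma u dv by exists du.
have onv : on_face node alpha sigma v dv by exists dv; split=> //; apply: connect0.
split; apply: contraT => nadj.
  by case: (maxG uv nadj); left; exists dv.
by case: (maxG _ nadj); [rewrite eq_sym | left; exists dv].
Qed.

Lemma crossing_adj_next e c u v : node e = inr c -> node (alpha e) = inl u ->
  node (alpha (sigma e)) = inl v -> u != v -> adj u v /\ adj v u.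
Proof.
move=> ec eu ev uv; apply: (face_adj uv eu (_ : node (sigma (alpha (sigma e))) = _)).
  by rewrite node_sigma.
by apply: connect_trans (face_step _) (face_step _); rewrite /phi ?alphaK.
Qed.

Section Crossing.
Variables (e : D) (c : C) (v0 v1 v2 v3 : V).
Hypotheses (ec : node e = inr c) (e0 : node (alpha e) = inl v0)
  (e1 : node (alpha (sigma e)) = inl v1)
  (e2 : node (alpha (sigma (sigma e))) = inl v2)
  (e3 : node (alpha (sigma (sigma (sigma e)))) = inl v3).

Let ec1 : node (sigma e) = inr c. Proof. by rewrite node_sigma. Qed.
Let ec2 : node (sigma (sigma e)) = inr c. Proof. by rewrite !node_sigma. Qed.
Let ec3 : node (sigma (sigma (sigma e))) = inr c. Proof. by rewrite !node_sigma. Qed.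

Lemma crossing_ends_uniq : uniq [:: v0; v1; v2; v3].
Proof.
have neq d d' a b : node d = inr c -> node d' = inr c ->
    node (alpha d) = inl a -> node (alpha d') = inl b -> d != d' -> a != b.
  move=> dc d'c da d'b; apply: contra_neq => ab.
  by apply: (crossing_end_inj dc d'c); rewrite da d'b ab.
have [_] := crossing_rotation ec.
rewrite /= !inE !negb_or -!andbA andbT => /and5P[n01 n02 n03 n12 /andP[n13 n23]].
by rewrite (neq _ _ _ _ ec ec1 e0 e1 n01) (neq _ _ _ _ ec ec2 e0 e2 n02)
  (neq _ _ _ _ ec ec3 e0 e3 n03) (neq _ _ _ _ ec1 ec2 e1 e2 n12)
  (neq _ _ _ _ ec1 ec3 e1 e3 n13) (neq _ _ _ _ ec2 ec3 e2 e3 n23).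
Qed.

(* Opposite ends are joined by the crossing edges, consecutive ends lie on a
   common face. *)
Lemma crossing_K4 : isK4 node alpha sigma [set v0; v1; v2; v3].
Proof.
have uniq_v := crossing_ends_uniq.
have [rot4 _] := crossing_rotation ec.
move: (uniq_v); rewrite /= !inE !negb_or -!andbA andbT.
move=> /and5P[n01 n02 n03 n12 /andP[n13 n23]].
have [a01 a10] := crossing_adj_next ec e0 e1 n01.
have [a12 a21] := crossing_adj_next ec1 e1 e2 n12.
have [a23 a32] := crossing_adj_next ec2 e2 e3 n23.
have [a30 a03] : adj v3 v0 /\ adj v0 v3.
  by apply: (crossing_adj_next ec3 e3); rewrite ?rot4 // eq_sym.
have a02 := crossing_adj_opposite ec e0 e2.
have a13 := crossing_adj_opposite ec1 e1 e3.
have a20 : adj v2 v0 by apply: (crossing_adj_opposite ec2 e2); rewrite rot4.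
have a31 : adj v3 v1 by apply: (crossing_adj_opposite ec3 e3); rewrite rot4.
apply/andP; split.
  have /card_uniqP /= <- := uniq_v; apply/eqP/eq_card => z.
  by rewrite !inE -!orbA.
apply/forallP => a; apply/implyP; rewrite !inE -!orbA.
move=> /or4P[] /eqP-> ; apply/forallP => b; apply/implyP; rewrite !inE -!orbA;
  by move=> /or4P[] /eqP->; apply/implyP; rewrite ?eqxx.
Qed.

End Crossing.

Lemma crosses_K4 u x s t : cross u x s t -> isK4 node alpha sigma [set u; x; s; t].
Proof.
move=> [d [c [du dx dc ends]]].
have e0 : node (alpha (alpha d)) = inl u by rewrite alphaK.
have e2 : node (alpha (sigma (sigma (alpha d)))) = inl x by move: dx; rewrite /farnode dc.
case: ends => [[e1 e3]|[e1 e3]]; [ have := crossing_K4 dc e0 e1 e2 e3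
                                  | have := crossing_K4 dc e0 e1 e2 e3 ];
  congr (is_true (isK4 _ _ _ _)); apply/setP => z; rewrite !inE;
  by case: (z == u); case: (z == x); case: (z == s); case: (z == t).
Qed.

Lemma crosses_neq u x s t : cross u x s t -> u != s.
Proof.
case/crosses_K4/andP => /eqP/card_set4_uniq /= /andP[].
by rewrite !inE !negb_or => /and3P[].
Qed.

Section MicroLink.
Variables (A F : {set V}) (u x w : V).
Hypotheses (noS : ~ exists K, strong_link node alpha sigma A K)
  (noW : ~ exists K, weak_link node alpha sigma A K)
  (FA : F :&: A \subset [set u]) (uA : u \in A) (xA : x \notin A) (wA : w \in A)
  (uw : u != w)
  (rule : (clean node alpha sigma u x /\ u \in F /\ x \in F) \/
          (exists s t, cross u x s t /\ F = [set u; x; s; t])).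

Lemma side_vertex_new y : side_vertex u x y -> y \in F :\: A.
Proof.
have xF : x \in F.
  by case: rule => [[_ [_ ->]]|[s [t [_ ->]]]]; rewrite // !inE eqxx ?orbT.
case=> [->|[y' uxy]]; first by rewrite inE xA xF.
have yF : y \in F.
  case: rule => [[ux _]|[s [t [uxst ->]]]]; first by case: (clean_not_crosses ux uxy).
  by move: (crosses_end_in uxst uxy); rewrite !inE => /orP[] ->; rewrite ?orbT.
rewrite inE yF andbT; apply: contra (crosses_neq uxy) => yA.
by rewrite eq_sym -in_set1 (subsetP FA) // inE yF.
Qed.

Lemma side_vertex_old y : side_vertex u w y -> y \in A :\ u.
Proof.
case=> [->|[y' uwy]]; first by rewrite !inE eq_sym uw.
have /subsetP sub : [set u; w; y; y'] \subset A.
  apply: (K4_subset_noSW noS noW (crosses_K4 uwy)).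
  apply: leq_trans (_ : #|[set u; w]| <= _); first by rewrite cards2 uw.
  apply/subset_leq_card/subsetP => z.
  by rewrite !inE => /orP[] /eqP->; rewrite eqxx ?orbT ?uA ?wA.
by rewrite !inE eq_sym (crosses_neq uwy) sub // !inE eqxx !orbT.
Qed.

(* The darts d and sigma d are consecutive around u, so the face through
   alpha d continues with sigma d: it sees a vertex beside ux and one
   beside uw. *)
Lemma consecutive_micro_edge : consecutive node alpha sigma u x w ->
  exists y z, [/\ y \in F :\: A, z \in A :\ u, adj y z & adj z y].
Proof.
case=> d [du ends]; have du' : node (sigma d) = inl u by rewrite node_sigma.
have turn : fconnect face (alpha d) (sigma d) by apply: face_step; rewrite /phi alphaK.
have yz y z : y \in F :\: A -> z \in A :\ u -> y != z.
  by rewrite !inE => /andP[yA _] /andP[_ zA]; apply: contraNneq yA => ->.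
case: ends => [[dx dw]|[dw dx]].
- have [y [dy [dyy dy_d /side_vertex_new yFA]]] := face_before_edge du dx.
  have [z [dz [dzz d_dz /side_vertex_old zAu]]] := face_after_edge du' dw.
  have [] := face_adj (yz _ _ yFA zAu) dyy dzz
    (connect_trans dy_d (connect_trans turn d_dz)).
  by exists y, z.
- have [z [dz [dzz dz_d /side_vertex_old zAu]]] := face_before_edge du dw.
  have [y [dy [dyy d_dy /side_vertex_new yFA]]] := face_after_edge du' dx.
  have zy : z != y by rewrite eq_sym yz.
  have [] := face_adj zy dzz dyy (connect_trans dz_d (connect_trans turn d_dy)).
  by exists y, z.
Qed.

End MicroLink.

Lemma swm_micro_edge A F t : swm_choice node alpha sigma A F -> F :&: A = [set t] ->
  exists y z, [/\ y \in F :\: A, z \in A :\ t, adj y z & adj z y].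
Proof.
move=> choice FAt; have card1 : #|F :&: A| = 1 by rewrite FAt cards1.
case: choice => [[_ /andP[_]]|[[_ [_ /andP[_]]]|]]; rewrite ?card1 //.
case=> noS noW _ [u [x [w [/and3P[uA xA wA] _ /gadj_neq uw [cons rule]]]]].
have uF : u \in F by case: rule => [[_ [-> _]]|[s [s' [_ ->]]]]; rewrite // !inE eqxx.
have ut : u = t by apply/set1P; rewrite -FAt inE uF uA.
subst t; apply: consecutive_micro_edge noS noW _ uA xA wA uw rule cons.
by rewrite FAt.
Qed.

End Maximal.
End PlaneMap.

Section Sequence.
Variables (V C D : finType) (node : D -> (V + C)%type) (alpha sigma : {perm D}).
Hypotheses (plane : one_plane node alpha sigma) (maxG : maximal_1p node alpha sigma).
Variables (N : nat) (Vs Fs : nat -> {set V}).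
Hypothesis swm : swm_sequence node alpha sigma N Vs Fs.
Local Notation adj := (gadj node alpha sigma).

Lemma swm_prefix_connected_setD1 j t : j <= N -> connected_on adj (Vs j :\ t).
Proof.
case: swm => K4V0 _ step; elim: j t => [|j IH] t jN; first exact: K4_connected_setD.
have [/andP[K4F /andP[meet _]] choice ->] := step j.+1 jN.
rewrite /= in meet choice *; rewrite setDUl.
have cA := IH t (ltnW jN).
have cF : connected_on adj (Fs j.+1 :\ t) := K4_connected_setD K4F.
have [FAt|/subsetPn[a /setIP[aF aA]]] :=
  boolP (Fs j.+1 :&: Vs j \subset [set t]); last first.
  rewrite in_set1 => at_.
  have aA' : a \in Vs j :\ t by rewrite in_setD1 at_.
  have aF' : a \in Fs j.+1 :\ t by rewrite in_setD1 at_.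
  exact: connected_on_setU cA cF aA' aF' (connect0 _ _) (connect0 _ _).
have {}FAt : Fs j.+1 :&: Vs j = [set t].
  by apply/eqP; rewrite eqEcard FAt cards1.
have [y [z [yFA zA yz zy]]] := swm_micro_edge plane maxG choice FAt.
have tA : t \in Vs j by have := set11 t; rewrite -FAt => /setIP[].
have yF : y \in Fs j.+1 :\ t.
  by move: yFA; rewrite !inE => /andP[yA ->]; rewrite andbT; apply: contraNneq yA => ->.
have zX : z \in Vs j :\ t :|: Fs j.+1 :\ t by rewrite inE zA.
have yX : y \in Vs j :\ t :|: Fs j.+1 :\ t by rewrite inE yF orbT.
exact: connected_on_setU cA cF zA yF
  (induced_connect1 zX yX zy) (induced_connect1 yX zX yz).
Qed.

Lemma link_meet_sub_new_cutset i s t : 1 <= i <= N ->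
  cutset adj (Vs i) [set s; t] -> ~ cutset adj (Vs i.-1) [set s; t] ->
  Fs i :&: Vs i.-1 \subset [set s; t].
Proof.
move=> iN cut ncut; case: swm => _ _ step; have [/andP[K4F _] _ Vi] := step i iN.
have cA : connected_on adj (Vs i.-1 :\: [set s; t]).
  have [|/subsetPn[r rS rA]] := boolP ([set s; t] \subset Vs i.-1).
    by move/connected_on_noncut; apply.
  have [q ->] : exists q, Vs i.-1 :\: [set s; t] = Vs i.-1 :\ q.
    case/set2P: rS rA => -> rA.
    - exists t; apply/setP => z; rewrite !inE negb_or.
      by case: (eqVneq z s) => [->|]; rewrite /= ?(negbTE rA) ?andbF.
    - exists s; apply/setP => z; rewrite !inE negb_or.
      by case: (eqVneq z t) => [->|]; rewrite /= ?(negbTE rA) ?andbF ?andbT.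
  apply: swm_prefix_connected_setD1; case/andP: iN => _; exact: leq_trans (leq_pred i).
apply/subsetP => a /setIP[aF aA]; apply/negPn/negP => aS.
apply: (cutset_disconnected cut); rewrite Vi setDUl.
have aA' : a \in Vs i.-1 :\: [set s; t] by rewrite inE aS.
have aF' : a \in Fs i :\: [set s; t] by rewrite inE aS.
exact: connected_on_setU cA (K4_connected_setD K4F) aA' aF' (connect0 _ _) (connect0 _ _).
Qed.

End Sequence.

Theorem lemma4p7 (V C D : finType) (node : D -> (V + C)%type)
  (alpha sigma : {perm D}) (N : nat) (Vs Fs : nat -> {set V}) :
  one_plane node alpha sigma ->
  maximal_1p node alpha sigma ->
  4 <= #|V| ->
  (forall u v, gadj node alpha sigma u v ->
     exists F, [/\ isK4 node alpha sigma F, u \in F & v \in F]) ->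
  swm_sequence node alpha sigma N Vs Fs ->
  forall (i : nat) (s t : V), 1 <= i <= N -> s != t ->
  cutset (gadj node alpha sigma) (Vs i) [set s; t] ->
  ~ cutset (gadj node alpha sigma) (Vs i.-1) [set s; t] ->
  (weak_link node alpha sigma (Vs i.-1) (Fs i) \/
   micro_link node alpha sigma (Vs i.-1) (Fs i)) /\
  ([set s; t] \subset Vs i.-1 \/
   (micro_link node alpha sigma (Vs i.-1) (Fs i) /\
    #|[set s; t] :&: Vs i.-1| = 1)).
Proof.
(* The bound on |V| and the covering of edges by K_4's only serve the
   existence of the sequence. *)
move=> plane maxG _ _ swm i s t iN st cut ncut.
have [_ _ step] := swm; have [/andP[K4F /andP[meet1 _]] _ _] := step i iN.
have FAS := link_meet_sub_new_cutset plane maxG swm iN cut ncut.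
have cardS : #|[set s; t]| = 2 by rewrite cards2 st.
rewrite /weak_link /micro_link K4F /=.
have [SA|SnA] := boolP ([set s; t] \subset Vs i.-1).
  split; last by left.
  have : #|Fs i :&: Vs i.-1| <= 2 by rewrite -cardS subset_leq_card.
  by case: #|_| meet1 => [|[|[|n]]] // _ _; [right | left].
have cardSA : #|[set s; t] :&: Vs i.-1| < 2.
  rewrite -cardS proper_card // properEneq subsetIl andbT.
  by apply: contraNneq SnA => <-; apply: subsetIr.
have FA_SA : #|Fs i :&: Vs i.-1| <= #|[set s; t] :&: Vs i.-1|.
  by apply: subset_leq_card; rewrite subsetI FAS subsetIr.
have FA1 : #|Fs i :&: Vs i.-1| = 1 by lia.
have SA1 : #|[set s; t] :&: Vs i.-1| = 1 by lia.
by rewrite FA1 SA1; split; right.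
Qed.
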